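(* Let $G$ be a complete geometric graph and let $B$ be a subgraph of $G$. If $B$ is a star of $G$ or a comb of $G$, then $B$ shares at least one edge with every simple spanning subgraph of $G$.
   Context: A geometric graph is a graph whose vertices are points in the plane in general position (no three collinear) and whose edges are straight segments between pairs of vertices; $G$ is complete if all pairs of vertices are joined. A geometric graph is simple if no two of its edges cross. A simple spanning subgraph of $G$ is a subgraph $H\subseteq G$ that is non-crossing and has no isolated vertices, i.e., every vertex of $G$ is incident to an edge of $H$. A star of $G$ is the set of all edges of $G$ emanating from a single vertex. A comb of $G$ is a simple spanning subgraph $B$ of $G$ such that: (1) the intersection of $B$ with the boundary of $\mathrm{conv}(V(G))$ is a simple path $P$; (2) each vertex in $V(G)\setminus P$ is connected by a unique edge of $B$ to an interior (non-endpoint) vertex of $P$; (3) for each edge $e$ of $B$, the line spanned by $e$ does not cross any edge of $B$. *)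

From HB Require Import structures.
From mathcomp Require Import all_boot all_order all_algebra.
From mathcomp Require Import all_classical all_reals topology normedtype.
Set Implicit Arguments. Unset Strict Implicit. Unset Printing Implicit Defensive.
Import Order.TTheory GRing.Theory Num.Theory.
Import numFieldNormedType.Exports.
Local Open Scope ring_scope.
Local Open Scope classical_set_scope.

Section Geom.
Variable R : realType.
Local Notation point := (R * R)%type.

Definition orient (a b c : point) : R :=
  (b.1 - a.1) * (c.2 - a.2) - (b.2 - a.2) * (c.1 - a.1).
Definition collinear (a b c : point) : Prop := orient a b c = 0.

Definition on_seg (z a b : point) : Prop :=
  exists t : R, 0 <= t <= 1 /\
    z = ((1 - t) * a.1 + t * b.1, (1 - t) * a.2 + t * b.2).

Definition on_line (z a b : point) : Prop :=
  exists t : R, z = (a.1 + t * (b.1 - a.1), a.2 + t * (b.2 - a.2)).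

Definition line_crosses_seg (a b c d : point) : Prop :=
  ~ on_line c a b /\ ~ on_line d a b /\ exists z, on_seg z c d /\ on_line z a b.

Variable V : finType.
Variable p : V -> point.

Definition general_position : Prop :=
  injective p /\
  forall a b c : V, a != b -> b != c -> a != c -> ~ collinear (p a) (p b) (p c).

Definition conv_hull : set (R * R)%type :=
  [set z | exists w : V -> R, (forall v, 0 <= w v) /\ \sum_v w v = 1 /\
      z = (\sum_v w v * (p v).1, \sum_v w v * (p v).2)].
Definition hull_boundary : set (R * R)%type :=
  closure conv_hull `\` interior conv_hull.

(* A graph on the vertex set (a subgraph of the complete geometric graph G):
   a symmetric irreflexive edge relation; the edge {u,v} is the segment
   [p u, p v]. *)
Definition is_graph (H : rel V) : Prop :=
  (forall u v, H u v = H v u) /\ (forall u, ~~ H u u).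

Definition edges_cross (u v x y : V) : Prop :=
  (u != v /\ x != y /\ u != x /\ u != y /\ v != x /\ v != y) /\
  exists z, on_seg z (p u) (p v) /\ on_seg z (p x) (p y).

Definition simple_graph (H : rel V) : Prop :=
  forall u v x y, H u v -> H x y -> ~ edges_cross u v x y.

Definition no_isolated (H : rel V) : Prop := forall v, exists u, H v u.

Definition simple_spanning (H : rel V) : Prop :=
  [/\ is_graph H, simple_graph H & no_isolated H].

Definition star (v : V) : rel V := fun a b => (a != b) && ((a == v) || (b == v)).

Definition graph_pts (H : rel V) : set point :=
  [set z | exists u w, H u w /\ on_seg z (p u) (p w)].

Definition path_pts (x0 : V) (P : seq V) : set point :=
  [set z | (exists x, x \in P /\ z = p x) \/
     exists i, i.+1 < size P /\ on_seg z (p (nth x0 P i)) (p (nth x0 P i.+1))]%N.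

Definition path_interior (x0 : V) (P : seq V) (u : V) : Prop :=
  exists i, (0 < i /\ i.+1 < size P)%N /\ u = nth x0 P i.

Definition is_comb (B : rel V) : Prop :=
  simple_spanning B /\
  exists (x0 : V) (P : seq V),
    [/\
        (0 < size P)%N /\ uniq P,
        (forall i, i.+1 < size P -> B (nth x0 P i) (nth x0 P i.+1))%N,
        graph_pts B `&` hull_boundary = path_pts x0 P,
        (forall w, w \notin P ->
           exists u, path_interior x0 P u /\ forall x, B w x = (x == u)) &
        (* (3) the line spanned by any edge of B crosses no edge of B *)
        (forall u v x y, B u v -> B x y ->
           ~ line_crosses_seg (p u) (p v) (p x) (p y))].

End Geom.

(* A star meets every graph without isolated vertices at its centre.  For a comb,
   number its path on the hull boundary c 0, ..., c k and give every other vertex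
   the index of the path vertex it hangs from.  All vertices lie on one side of each
   hull edge c j c (j+1), and by condition (3) no comb edge separates two vertices
   joined by comb edges avoiding it.  From this, if x has index > i and y has index
   <= i (x <> c (i+1), y <> c i), then y lies on the hull side of the line c i x,
   and symmetrically for c (i+1).  Now let H be simple, spanning and edge-disjoint
   from the comb.  The H-neighbour of c 1 has index > 1 and that of c (k-1) has
   index <= k-1, so for some 0 < i < k-1 the neighbour v of c i has index > i while
   the neighbour u of c (i+1) has index <= i; the side conditions then make the
   H-edges c i v and c (i+1) u cross. *)

From mathcomp Require Import all_boot all_order all_algebra.
From mathcomp Require Import all_classical all_reals topology normedtype.
From mathcomp Require Import ring lra zify.
Set Implicit Arguments. Unset Strict Implicit. Unset Printing Implicit Defensive.
Import Order.TTheory GRing.Theory Num.Theory.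
Import numFieldNormedType.Exports.
Local Open Scope ring_scope.
Local Open Scope classical_set_scope.

Section SignArithmetic.
Variable R : realFieldType.
Implicit Types a b c l s t u v : R.

Lemma mul_self_gt0 a : a != 0 -> 0 < a * a.
Proof. by move=> a0; rewrite -expr2 exprn_even_gt0 //= a0 orbT. Qed.

Lemma mul_gt0_trans a b c : 0 < a * b -> 0 < b * c -> 0 < a * c.
Proof.
move=> ab bc; have b0 : b != 0 by apply: contraTneq ab => ->; rewrite mulr0 ltxx.
have : 0 < (a * b) * (b * c) by rewrite mulr_gt0.
have -> : a * b * (b * c) = (b * b) * (a * c) by ring.
by rewrite pmulr_rgt0 // mul_self_gt0.
Qed.

Lemma mul_lt0_of_sign s a b : 0 < s * a -> s * b < 0 -> a * b < 0.
Proof.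
move=> sa sb; have s0 : s != 0 by apply: contraTneq sa => ->; rewrite mul0r ltxx.
have : (s * a) * (s * b) < 0 by rewrite pmulr_rlt0.
by rewrite mulrACA pmulr_rlt0 // mul_self_gt0.
Qed.

Lemma convex_comb_sign a u v l : 0 < a * u -> 0 < a * v -> 0 < l < 1 ->
  0 < a * ((1 - l) * u + l * v).
Proof.
move=> au av /andP[l0 l1].
by rewrite mulrDr mulrCA [a * (l * v)]mulrCA addr_gt0 // mulr_gt0 // subr_gt0.
Qed.

Lemma affine_root_gt1 a b t : 0 < a * b -> 0 < t -> (1 - t) * a + t * b = 0 -> 1 < t.
Proof.
move=> ab t0 e; have a0 : a != 0 by apply: contraTneq ab => ->; rewrite mul0r ltxx.
have aa := mul_self_gt0 a0.
have {}e : (1 - t) * (a * a) + t * (a * b) = 0 by rewrite -(mulr0 a) -e; ring.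
have : (1 - t) * (a * a) < 0.
  by move/eqP: e; rewrite addr_eq0 => /eqP ->; rewrite oppr_lt0 mulr_gt0.
by rewrite pmulr_llt0 // subr_lt0.
Qed.

Lemma div_ge0_of_mul a b : 0 <= a * b -> 0 <= a / b.
Proof.
have [->|b0] := eqVneq b 0; first by rewrite invr0 mulr0.
have -> : a / b = (a * b) / (b * b) by field.
by move=> h; rewrite divr_ge0 // -expr2 sqr_ge0.
Qed.

Lemma mul_ge0_near_half u v : `|u - v / 2| <= `|v| / 2 -> 0 <= u * v.
Proof.
rewrite ler_norml; have [v0|v0] := lerP 0 v.
  by rewrite ger0_norm //; nra.
by rewrite ltr0_norm //; nra.
Qed.
End SignArithmetic.

Section Orientation.
Variable R : realType.
Local Notation point := (R * R)%type.
Implicit Types (a b c d x y z : point) (t : R).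

Definition lerp a b t : point :=
  ((1 - t) * a.1 + t * b.1, (1 - t) * a.2 + t * b.2).

Lemma orient_rot a b c : orient a b c = orient b c a.
Proof. by rewrite /orient; ring. Qed.

Lemma orient_swap12 a b c : orient b a c = - orient a b c.
Proof. by rewrite /orient; ring. Qed.

Lemma orient_swap23 a b c : orient a c b = - orient a b c.
Proof. by rewrite /orient; ring. Qed.

Lemma orient_xyx a b : orient a b a = 0.
Proof. by rewrite /orient; ring. Qed.

Lemma orient_xyy a b : orient a b b = 0.
Proof. by rewrite /orient; ring. Qed.

Lemma orient_lerp a b x y t :
  orient a b (lerp x y t) = (1 - t) * orient a b x + t * orient a b y.
Proof. by rewrite /orient /lerp /=; ring. Qed.

Lemma lerp_on_seg a b t : 0 <= t <= 1 -> on_seg (lerp a b t) a b.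
Proof. by exists t. Qed.

Lemma on_line_orient z a b : on_line z a b -> orient a b z = 0.
Proof. by case=> t ->; rewrite /orient /=; ring. Qed.

Lemma orient_on_line z a b : a != b -> orient a b z = 0 -> on_line z a b.
Proof.
case: a b z => [a1 a2] [b1 b2] [z1 z2] ab; rewrite /orient /= => h.
have [e1|ne1] := eqVneq (b1 - a1) 0.
  have ne2 : b2 - a2 != 0.
    apply: contraNneq ab => /eqP; rewrite subr_eq0 => /eqP e2.
    by move/eqP: e1; rewrite subr_eq0 => /eqP ->; rewrite e2.
  exists ((z2 - a2) / (b2 - a2)); congr (_, _) => /=; last by field.
  move/eqP: h; rewrite e1 mul0r sub0r oppr_eq0 mulf_eq0 (negbTE ne2) subr_eq0.
  by move=> /eqP ->; ring.
exists ((z1 - a1) / (b1 - a1)); congr (_, _) => /=; first by field.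
have : (b1 - a1) * (z2 - (a2 + (z1 - a1) / (b1 - a1) * (b2 - a2))) = 0.
  by rewrite -[RHS]h; field.
by move/eqP; rewrite mulf_eq0 (negbTE ne1) subr_eq0 => /eqP.
Qed.

Lemma line_meets_seg a b c d : orient a b c * orient a b d < 0 ->
  exists2 l, 0 < l < 1 & orient a b (lerp c d l) = 0.
Proof.
set oc := orient a b c; set od := orient a b d => h.
have hne : oc - od != 0 by rewrite subr_eq0; apply/eqP => e; rewrite e in h; nra.
exists (oc / (oc - od)); last by rewrite orient_lerp -/oc -/od; field.
have [ocp|ocn] := ltP 0 oc.
  have dp : 0 < oc - od by nra.
  by rewrite divr_gt0 //= ltr_pdivrMr // mul1r; nra.
have dn : oc - od < 0 by nra.
by rewrite ltr_ndivrMr // mul1r ltr_ndivlMr // mul0r; nra.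
Qed.

Lemma line_crosses_seg_opposite a b c d : a != b ->
  orient a b c * orient a b d < 0 -> line_crosses_seg a b c d.
Proof.
move=> ab h; split; first by move/on_line_orient => e; rewrite e mul0r in h; lra.
split; first by move/on_line_orient => e; rewrite e mulr0 in h; lra.
have [l /andP[l0 l1] hz] := line_meets_seg h.
by exists (lerp c d l); split; [apply: lerp_on_seg; lra | exact: orient_on_line].
Qed.

Lemma lines_meet_once a b c d z1 z2 : orient a b c != orient a b d ->
  orient a b z1 = 0 -> orient a b z2 = 0 -> orient c d z1 = 0 -> orient c d z2 = 0 ->
  z1 = z2.
Proof.
rewrite -subr_eq0 => K h1 h2 h3 h4.
have e1 : (orient a b c - orient a b d) * (z1.1 - z2.1) =
  (orient c d z1 - orient c d z2) * (b.1 - a.1) - (orient a b z1 - orient a b z2) * (d.1 - c.1).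
  by rewrite /orient; ring.
have e2 : (orient a b c - orient a b d) * (z1.2 - z2.2) =
  (orient c d z1 - orient c d z2) * (b.2 - a.2) - (orient a b z1 - orient a b z2) * (d.2 - c.2).
  by rewrite /orient; ring.
move: e1 e2; rewrite h1 h2 h3 h4 !subrr !mul0r subrr => /eqP e1 /eqP e2.
move: e1 e2; rewrite !mulf_eq0 (negbTE K) /= !subr_eq0 => /eqP e1 /eqP e2.
by move: e1 e2; case: z1 {h1 h3} => ? ?; case: z2 {h2 h4} => ? ? /= -> ->.
Qed.

Lemma segs_meet_opposite a b c d : orient a b c * orient a b d < 0 ->
  orient c d a * orient c d b < 0 -> exists z, on_seg z a b /\ on_seg z c d.
Proof.
move=> h1 h2.
have [l /andP[l0 l1] hz] := line_meets_seg h2.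
have [m /andP[m0 m1] hz'] := line_meets_seg h1.
exists (lerp a b l); split; first by apply: lerp_on_seg; lra.
suff -> : lerp a b l = lerp c d m by apply: lerp_on_seg; lra.
apply: (@lines_meet_once a b c d _ _ _ _ hz' hz).
- by apply/eqP => e; rewrite e in h1; nra.
- by rewrite orient_lerp orient_xyx orient_xyy; ring.
- by rewrite orient_lerp orient_xyx orient_xyy; ring.
Qed.

Lemma orient_sum a b c z : orient z b c + orient a z c + orient a b z = orient a b c.
Proof. by rewrite /orient; ring. Qed.

Lemma orient_barycentric a b c z : orient a b c != 0 ->
  z = (orient z b c / orient a b c * a.1 + orient a z c / orient a b c * b.1
         + orient a b z / orient a b c * c.1,
       orient z b c / orient a b c * a.2 + orient a z c / orient a b c * b.2
         + orient a b z / orient a b c * c.2).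
Proof. by case: z => z1 z2; rewrite /orient => D0; congr (_, _) => /=; field. Qed.

Lemma orient_near a b z w (e : R) : `|z.1 - w.1| < e -> `|z.2 - w.2| < e ->
  `|orient z a b - orient w a b| <= e * (`|a.2 - b.2| + `|b.1 - a.1|).
Proof.
move=> h1 h2.
have -> : orient z a b - orient w a b = (z.1 - w.1) * (a.2 - b.2) + (z.2 - w.2) * (b.1 - a.1).
  by rewrite /orient; ring.
apply: (le_trans (ler_normD _ _)); rewrite !normrM mulrDr.
by apply: lerD; apply: ler_wpM2r => //; apply: ltW.
Qed.

(* Were y1 and y2 separated by the line a x, the segment [y1, y2] would meet it at
   a point a + t (x - a).  Since y1, y2 and x lie on one side of the line a b we get
   t > 0, since a and x lie on one side of the line y1 y2 we get t > 1, so this point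
   lies beyond x and hence on the other side of the line x x' than a: impossible. *)
Lemma ray_beyond_not_separate s a b x x' y1 y2 : a != x ->
  0 < s * orient a b x -> 0 < s * orient a b y1 -> 0 < s * orient a b y2 ->
  0 < orient y1 y2 a * orient y1 y2 x ->
  0 < orient x x' y1 * orient x x' y2 -> 0 < orient x x' y1 * orient x x' a ->
  ~ orient a x y1 * orient a x y2 < 0.
Proof.
move=> ax hx hy1 hy2 hy hx1 hx2 /line_meets_seg[l hl hz].
have [t ht] := orient_on_line ax hz.
have ez : lerp y1 y2 l = lerp a x t by rewrite ht /lerp; congr (_, _); ring.
have e1 := orient_lerp a b y1 y2 l.
rewrite ez orient_lerp orient_xyx mulr0 add0r in e1.
have t0 : 0 < t.
  by have := convex_comb_sign hy1 hy2 hl; rewrite -e1 mulrCA pmulr_lgt0.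
have e2 := orient_lerp y1 y2 y1 y2 l.
rewrite ez orient_lerp orient_xyx orient_xyy !mulr0 addr0 in e2.
have t1 : 1 < t := affine_root_gt1 hy t0 e2.
have e3 := orient_lerp x x' y1 y2 l.
rewrite ez orient_lerp orient_xyx mulr0 addr0 in e3.
have o1 : orient x x' y1 != 0 by apply: contraTneq hx1 => ->; rewrite mul0r ltxx.
have := convex_comb_sign (mul_self_gt0 o1) hx1 hl.
by rewrite -e3 mulrCA pmulr_lgt0 // subr_gt0 ltNge (ltW t1).
Qed.

End Orientation.


Section HullInterior.
Variables (R : realType) (V : finType) (p : V -> R * R).
Local Notation O a b d := (orient (p a) (p b) (p d)).

Lemma conv_hull_triangle (a b c : V) (al be ga : R) :
  0 <= al -> 0 <= be -> 0 <= ga -> al + be + ga = 1 ->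
  conv_hull p (al * (p a).1 + be * (p b).1 + ga * (p c).1,
               al * (p a).2 + be * (p b).2 + ga * (p c).2).
Proof.
move=> al0 be0 ga0 hs.
pose w v := al * (v == a)%:R + be * (v == b)%:R + ga * (v == c)%:R.
have sum_w (F : V -> R) : \sum_v w v * F v = al * F a + be * F b + ga * F c.
  have sum1 (x : V) : \sum_v (v == x)%:R * F v = F x.
    by rewrite (bigD1 x) //= eqxx mul1r big1 ?addr0 // => v /negbTE ->; rewrite mul0r.
  rewrite (eq_bigr (fun v => al * ((v == a)%:R * F v) + be * ((v == b)%:R * F v)
     + ga * ((v == c)%:R * F v))); last by move=> v _; rewrite /w; ring.
  by rewrite !big_split /= -!mulr_sumr !sum1.
exists w; split; first by move=> v; rewrite /w !addr_ge0 // mulr_ge0 // ler0n.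
split; last by rewrite !sum_w.
transitivity (\sum_v w v * 1); first by apply: eq_bigr => v _; rewrite mulr1.
by rewrite sum_w !mulr1.
Qed.

Definition midpoint (a b : R * R) : R * R := lerp a b 2^-1.

(* Near the midpoint of [a, b] the barycentric coordinates of a and b are close to 1/2. *)
Lemma conv_hull_near_midpoint (a b c : V) : O a b c != 0 ->
  exists2 e, 0 < e & forall z : R * R,
    `|z.1 - (midpoint (p a) (p b)).1| < e -> `|z.2 - (midpoint (p a) (p b)).2| < e ->
    0 <= orient (p a) (p b) z / O a b c -> conv_hull p z.
Proof.
set D := O a b c; set m := midpoint (p a) (p b) => D0.
set M := 1 + (`|(p b).2 - (p c).2| + `|(p c).1 - (p b).1|)
           + (`|(p c).2 - (p a).2| + `|(p a).1 - (p c).1|).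
have M0 : 0 < M by rewrite /M -addrA ltr_wpDr // !addr_ge0.
have Dp : 0 < `|D| by rewrite normr_gt0.
exists (`|D| / (2 * M)); first by rewrite divr_gt0 // mulr_gt0.
move=> z h1 h2 hc.
have eM : `|D| / (2 * M) * M = `|D| / 2 by field; rewrite lt0r_neq0.
have coord_ge0 (x y : R * R) : orient m x y = D / 2 ->
    `|x.2 - y.2| + `|y.1 - x.1| <= M -> 0 <= orient z x y / D.
  move=> mxy hM; apply/div_ge0_of_mul/mul_ge0_near_half; rewrite -mxy.
  apply: (le_trans (orient_near _ _ h1 h2)).
  by rewrite -eM ler_wpM2l // divr_ge0 ?mulr_ge0 ?ltW.
have ha : 0 <= orient z (p b) (p c) / D.
  apply: coord_ge0; first by rewrite /m /midpoint /D /orient /lerp /=; field.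
  by rewrite /M; have := normr_ge0 ((p c).2 - (p a).2); have := normr_ge0 ((p a).1 - (p c).1); lra.
have hb : 0 <= orient (p a) z (p c) / D.
  rewrite orient_rot; apply: coord_ge0; first by rewrite /m /midpoint /D /orient /lerp /=; field.
  by rewrite /M; have := normr_ge0 ((p b).2 - (p c).2); have := normr_ge0 ((p c).1 - (p b).1); lra.
rewrite (orient_barycentric z D0); apply: conv_hull_triangle => //.
by rewrite -!mulrDl orient_sum divff.
Qed.

Lemma midpoint_interior (a b c1 c2 : V) : 0 < O a b c1 -> O a b c2 < 0 ->
  interior (conv_hull p) (midpoint (p a) (p b)).
Proof.
move=> hc1 hc2.
have [e1 e10 H1] := conv_hull_near_midpoint (lt0r_neq0 hc1).
have [e2 e20 H2] := conv_hull_near_midpoint (ltr0_neq0 hc2).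
apply/nbhs_ballP; exists (Num.min e1 e2) => /=; first by rewrite lt_min e10 e20.
move=> z [/=]; rewrite /ball /= !(distrC _ (z.1)) !(distrC _ (z.2)) !lt_min.
move=> /andP[h11 h12] /andP[h21 h22].
have [hp|hn] := leP 0 (orient (p a) (p b) z).
  by apply: H1 => //; rewrite divr_ge0 // ltW.
by apply: H2 => //; apply: div_ge0_of_mul; nra.
Qed.
End HullInterior.

(* A comb with spine [c 0; ...; c k] on the hull boundary, read through an index
   g : V -> nat: g v is the position on the spine of v or of the spine vertex its
   unique edge goes to.  The sign s tells on which side of the spine edges the
   vertices lie. *)
Record comb_layout (R : realType) (V : finType) (p : V -> R * R) (B : rel V)
    (k : nat) (c : nat -> V) (g : V -> nat) (s : R) : Prop := CombLayout {
  layout_gp : general_position p;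
  layout_sym : forall u v, B u v = B v u;
  layout_irr : forall u, ~~ B u u;
  layout_index_spine : forall j, (j <= k)%N -> g (c j) = j;
  layout_index_le : forall v, (g v <= k)%N;
  layout_tooth : forall v, v = c (g v) \/ ((0 < g v < k)%N /\ B v (c (g v)));
  layout_spine_edge : forall j, (j < k)%N -> B (c j) (c j.+1);
  layout_lines : forall u v x y, B u v -> B x y ->
    ~ line_crosses_seg (p u) (p v) (p x) (p y);
  layout_side : forall j v, (j < k)%N -> v != c j -> v != c j.+1 ->
    0 < s * orient (p (c j)) (p (c j.+1)) (p v) }.

Lemma comb_layout_rev (R : realType) (V : finType) (p : V -> R * R) (B : rel V)
    k c g (s : R) : comb_layout p B k c g s ->
  comb_layout p B k (fun j => c (k - j)%N) (fun v => (k - g v)%N) (- s).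
Proof.
case=> gp sym irr cg gk tooth spine lines side; split => //.
- by move=> j jk /=; rewrite cg ?leq_subr //; lia.
- by move=> v; rewrite leq_subr.
- move=> v; have gvk := gk v; rewrite (_ : k - (k - g v) = g v)%N; last by lia.
  by case: (tooth v) => [ev|[h1 h2]]; [left | right; split => //; lia].
- move=> j jk /=; rewrite sym (_ : k - j = (k - j.+1).+1)%N; last by lia.
  by apply: spine; lia.
- move=> j v jk /=; rewrite (_ : k - j = (k - j.+1).+1)%N; last by lia.
  by move=> h1 h2; rewrite orient_swap12 mulrNN; apply: side => //; lia.
Qed.

Section RightPart.
Variables (R : realType) (V : finType) (p : V -> R * R) (B : rel V).
Variables (k : nat) (c : nat -> V) (g : V -> nat) (s : R).
Hypothesis L : comb_layout p B k c g s.
Local Notation O a b d := (orient (p a) (p b) (p d)).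

Lemma neq_of_index_lt x y : (g x < g y)%N -> x != y.
Proof. by apply: contraTneq => ->; rewrite ltnn. Qed.

Lemma orient_neq0 a b d : a != b -> b != d -> a != d -> O a b d != 0.
Proof. by move=> h1 h2 h3; apply/eqP; case: (layout_gp L) => _ /(_ a b d h1 h2 h3). Qed.

Lemma edge_neq a b : B a b -> a != b.
Proof. by apply: contraTneq => ->; apply: (layout_irr L). Qed.

Lemma edge_line_sameside e f x y : B e f -> B x y ->
  x != e -> x != f -> y != e -> y != f -> 0 < O e f x * O e f y.
Proof.
move=> bef bxy xe xf ye yf; have ef := edge_neq bef.
have ox : O e f x != 0 by apply: orient_neq0; rewrite // eq_sym.
have oy : O e f y != 0 by apply: orient_neq0; rewrite // eq_sym.
apply: contrapT => hn; apply: (layout_lines L bef bxy).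
apply: line_crosses_seg_opposite; first by rewrite (inj_eq (layout_gp L).1).
by rewrite lt_neqAle mulf_neq0 //= leNgt; apply/negP.
Qed.

(* The vertices of index > m are connected through edges avoiding those of
   index <= m, so none of these edges can separate them. *)
Lemma right_part_sameside m e f : B e f -> (g e <= m)%N -> (g f <= m)%N -> (m < k)%N ->
  forall v, (m < g v)%N -> 0 < O e f v * O e f (c m.+1).
Proof.
move=> bef ge gf mk.
have ne v : (m < g v)%N -> v != e by move=> hv; rewrite eq_sym neq_of_index_lt //; lia.
have nf v : (m < g v)%N -> v != f by move=> hv; rewrite eq_sym neq_of_index_lt //; lia.
have gc := layout_index_spine L.
have spine j : (m < j <= k)%N -> 0 < O e f (c j) * O e f (c m.+1).
  elim: j => [|j IH] hj; first lia.
  have [->|njm] := eqVneq j m.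
    apply/mul_self_gt0/orient_neq0; first exact: edge_neq.
      by rewrite eq_sym nf // gc //; lia.
    by rewrite eq_sym ne // gc //; lia.
  have h1 := IH ltac:(lia).
  have h2 : 0 < O e f (c j.+1) * O e f (c j).
    by rewrite mulrC; apply: edge_line_sameside => //;
      [apply: (layout_spine_edge L) | apply: ne | apply: nf | apply: ne | apply: nf];
      rewrite ?gc //; lia.
  exact: mul_gt0_trans h2 h1.
move=> v hv; have gvk := layout_index_le L v.
case: (layout_tooth L v) => [->|[hl bl]]; first by apply: spine; lia.
have h1 : 0 < O e f v * O e f (c (g v)).
  by apply: edge_line_sameside => //; [apply: ne | apply: nf | apply: ne | apply: nf];
    rewrite ?gc //; lia.
exact: mul_gt0_trans h1 (spine (g v) ltac:(lia)).
Qed.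

End RightPart.

Section LeftPart.
Variables (R : realType) (V : finType) (p : V -> R * R) (B : rel V).
Variables (k : nat) (c : nat -> V) (g : V -> nat) (s : R).
Hypothesis L : comb_layout p B k c g s.
Local Notation O a b d := (orient (p a) (p b) (p d)).

Lemma left_part_sameside m e f : B e f -> (m <= g e)%N -> (m <= g f)%N -> (0 < m)%N ->
  forall v, (g v < m)%N -> 0 < O e f v * O e f (c m.-1).
Proof.
move=> bef ge gf m0 v gv; have gek := layout_index_le L e.
have := right_part_sameside (comb_layout_rev L) (m := (k - m)%N) bef
  ltac:(lia) ltac:(lia) ltac:(lia) (v := v) ltac:(lia).
by rewrite (_ : k - (k - m).+1 = m.-1)%N //; lia.
Qed.

Lemma right_neighbour i x : (i < k)%N -> (i < g x)%N -> x != c i.+1 ->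
  exists2 x', B x x' & (i < g x')%N.
Proof.
move=> ik ix xc; have gc := layout_index_spine L; have gxk := layout_index_le L x.
case: (layout_tooth L x) => [ex|[_ bx]]; last by exists (c (g x)); rewrite ?gc.
have gx : (i.+1 < g x)%N.
  by rewrite ltn_neqAle ix andbT; apply: contraNneq xc => e; rewrite ex -e.
exists (c (g x).-1); last by rewrite gc //; lia.
have gx0 : (0 < g x)%N by lia.
have gxk' : ((g x).-1 < k)%N by lia.
by have := layout_spine_edge L gxk'; rewrite prednK // (layout_sym L) -ex.
Qed.

Lemma left_part_ind i (Q : V -> Prop) : (0 < i <= k)%N -> Q (c i.-1) ->
  (forall y y', B y y' -> (g y < i)%N -> (g y' < i)%N -> Q y -> Q y') ->
  forall v, (g v < i)%N -> Q v.
Proof.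
move=> /andP[i0 ik] base step; have gc := layout_index_spine L.
have spine d : (d < i)%N -> Q (c (i.-1 - d)).
  elim: d => [|d IH] hd; first by rewrite subn0.
  apply: (step (c (i.-1 - d))); rewrite ?gc; try lia; last by apply: IH; lia.
  rewrite (_ : i.-1 - d = (i.-1 - d.+1).+1)%N; last by lia.
  by rewrite (layout_sym L); apply: (layout_spine_edge L); lia.
move=> v gv; have gvk := layout_index_le L v.
have cv : Q (c (g v)).
  by have := spine (i.-1 - g v)%N ltac:(lia); rewrite (_ : i.-1 - (i.-1 - g v) = g v)%N //; lia.
case: (layout_tooth L v) => [-> //|[hl bl]].
by apply: (step (c (g v))); rewrite ?gc // (layout_sym L).
Qed.

Lemma left_part_keeps_side i x : (i < k)%N -> (i < g x)%N -> x != c i.+1 ->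
  forall y1 y2, B y1 y2 -> (g y1 < i)%N -> (g y2 < i)%N ->
  0 < s * O (c i) x y1 -> 0 < s * O (c i) x y2.
Proof.
move=> ik ix xc y1 y2 b12 g1 g2 Q1.
have [x' bxx' ix'] := right_neighbour ik ix xc.
have ga : g (c i) = i by rewrite (layout_index_spine L) // ltnW.
have gb : g (c i.+1) = i.+1 by rewrite (layout_index_spine L).
have ne := neq_of_index_lt (g := g).
have xa : c i != x by rewrite ne ?ga.
have left_neq y : (g y < i)%N -> [/\ y != c i, y != c i.+1, y != x & y != x'].
  by move=> gy; rewrite !ne ?ga ?gb //; lia.
have [y1a y1b y1x y1x'] := left_neq y1 g1; have [y2a y2b y2x y2x'] := left_neq y2 g2.
have side v : v != c i -> v != c i.+1 -> 0 < s * O (c i) (c i.+1) v := layout_side L ik.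
have s1 : 0 < O y1 y2 (c i.+1) * O y1 y2 x.
  by rewrite mulrC; apply: (right_part_sameside L b12 (ltnW g1) (ltnW g2) ik ix).
have s2 : 0 < O y1 y2 (c i) * O y1 y2 (c i.+1).
  by apply: (edge_line_sameside L b12 (layout_spine_edge L ik)); rewrite eq_sym.
have s4 : 0 < O x x' y1 * O x x' y2 by apply: (edge_line_sameside L).
have s5 : 0 < O x x' y1 * O x x' (c i) := left_part_sameside bxx' ix ix' (ltn0Sn i) (leqW g1).
have cx : p (c i) != p x by rewrite (inj_eq (layout_gp L).1).
apply: contrapT => hn; apply: (ray_beyond_not_separate cx _ (side _ y1a y1b) (side _ y2a y2b)
  (mul_gt0_trans s2 s1) s4 s5).
  by apply: side; rewrite // eq_sym.
have o2 : O (c i) x y2 != 0 by apply: (orient_neq0 L); rewrite // eq_sym.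
have s0 : s != 0 by apply: contraTneq Q1 => ->; rewrite mul0r ltxx.
apply: (mul_lt0_of_sign Q1).
by rewrite lt_neqAle mulf_neq0 //= leNgt; apply/negP.
Qed.

Lemma right_chord_left_side i x y : (0 < i)%N -> (i < k)%N -> (i < g x)%N -> x != c i.+1 ->
  (g y <= i)%N -> y != c i -> 0 < s * O (c i) x y.
Proof.
move=> i0 ik ix xc yi yc.
have gc := layout_index_spine L; have ne := neq_of_index_lt (g := g).
have base : 0 < s * O (c i) x (c i.-1).
  have ik' : (i.-1 < k)%N by lia.
  have := layout_side L ik' (v := x); rewrite prednK // orient_rot; apply.
    by rewrite eq_sym ne // gc //; lia.
  by rewrite eq_sym ne // gc //; lia.
have ik0 : (0 < i <= k)%N by rewrite i0 ltnW.
have left := left_part_ind (Q := fun v => 0 < s * O (c i) x v) ik0 base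
  (left_part_keeps_side ik ix xc).
case: (layout_tooth L y) => [ey|[_ yb]].
  by apply: left; rewrite ltn_neqAle yi andbT; apply: contra_neq yc => e; rewrite ey e.
have [gy|] := eqVneq (g y) i; last by move=> h; apply: left; rewrite ltn_neqAle h.
rewrite gy (layout_sym L) in yb.
have Fy : 0 < s * O (c i) (c i.+1) y by apply: (layout_side L); rewrite // ne ?gc ?gy //; lia.
have h := right_part_sameside L yb (eq_leq (gc i (ltnW ik))) (eq_leq gy) ik ix.
rewrite orient_swap23 [O (c i) y (c i.+1)]orient_swap23 mulrNN mulrC in h.
exact: mul_gt0_trans Fy h.
Qed.
End LeftPart.

Section Crossing.
Variables (R : realType) (V : finType) (p : V -> R * R) (B : rel V).
Variables (k : nat) (c : nat -> V) (g : V -> nat) (s : R).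
Hypothesis L : comb_layout p B k c g s.
Local Notation O a b d := (orient (p a) (p b) (p d)).

Lemma left_chord_right_side i u v : (0 < i)%N -> (i.+1 < k)%N -> (g u <= i)%N -> u != c i ->
  (i < g v)%N -> v != c i.+1 -> 0 < - s * O (c i.+1) u v.
Proof.
move=> i0 ik gu uc gv vc.
have e1 : (k - (k - i.+1).+1 = i)%N by lia.
have e2 : (k - (k - i.+1) = i.+1)%N by lia.
have := right_chord_left_side (comb_layout_rev L) (i := (k - i.+1)%N) (x := u) (y := v).
by rewrite /= e1 e2; apply => //; lia.
Qed.

Lemma spine_chords_cross i u v : (0 < i)%N -> (i.+1 < k)%N ->
  (i < g v)%N -> v != c i.+1 -> (g u <= i)%N -> u != c i ->
  exists z, on_seg z (p (c i)) (p v) /\ on_seg z (p (c i.+1)) (p u).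
Proof.
move=> i0 ik gv vc gu uc.
have ne := neq_of_index_lt (g := g); have gc := layout_index_spine L.
have hA := right_chord_left_side L i0 (ltnW ik) gv vc gu uc.
have hB := left_chord_right_side i0 ik gu uc gv vc.
have Fv : 0 < s * O (c i) (c i.+1) v.
  by apply: (layout_side L); [lia | rewrite eq_sym ne ?gc //; lia | ].
have Fu : 0 < s * O (c i) (c i.+1) u.
  by apply: (layout_side L); [lia | | rewrite ne ?gc //; lia].
apply: segs_meet_opposite; rewrite mulrC.
  by apply: (mul_lt0_of_sign hA); rewrite orient_swap23 mulrN oppr_lt0.
by apply: (mul_lt0_of_sign hB); rewrite -orient_rot mulNr oppr_lt0.
Qed.
End Crossing.

Lemma exists_switch (P : pred nat) n : (1 <= n)%N -> P 1 -> ~~ P n ->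
  exists i, [/\ (0 < i < n)%N, P i & ~~ P i.+1].
Proof.
elim: n => [//|n IH] n1 P1 Pn.
have [n0|n0] := posnP n; first by move: P1 Pn; rewrite n0 => ->.
case: (boolP (P n)) => [Pn'|/(IH n0 P1)[i [/andP[i0 iN] Pi Pi1]]].
  by exists n; split; rewrite ?n0 ?ltnSn.
by exists i; rewrite i0 ltnS ltnW.
Qed.

Section AvoidingGraph.
Variables (R : realType) (V : finType) (p : V -> R * R) (B : rel V).
Variables (k : nat) (c : nat -> V) (g : V -> nat) (s : R).
Hypothesis L : comb_layout p B k c g s.
Variable H : rel V.
Hypothesis H_irr : forall u, ~~ H u u.
Hypothesis H_spanning : no_isolated H.
Hypothesis H_avoids : forall u v, H u v -> ~~ B u v.

Definition spine_nbr i := odflt (c i) [pick v | H (c i) v].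

Lemma spine_nbrP i : H (c i) (spine_nbr i).
Proof.
rewrite /spine_nbr; case: pickP => [//|none].
by have [w] := H_spanning (c i); rewrite none.
Qed.

Lemma spine_nbr_neq_next i : (i < k)%N -> spine_nbr i != c i.+1.
Proof.
move=> ik; apply: contraTneq (H_avoids (spine_nbrP i)) => ->.
by rewrite negbK (layout_spine_edge L).
Qed.

Lemma spine_nbr_neq_prev i : (0 < i <= k)%N -> spine_nbr i != c i.-1.
Proof.
move=> /andP[i0 ik]; apply: contraTneq (H_avoids (spine_nbrP i)) => ->.
have ik' : (i.-1 < k)%N by rewrite prednK // ltnW.
by have := layout_spine_edge L ik'; rewrite prednK // (layout_sym L) => ->.
Qed.

Lemma spine_nbr_index_neq i : g (spine_nbr i) != i.
Proof.
apply/eqP => e; have hv := spine_nbrP i.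
case: (layout_tooth L (spine_nbr i)) => [ev|[_ bv]].
  by move: hv; rewrite ev e (negbTE (H_irr _)).
by rewrite e in bv; move: (H_avoids hv); rewrite (layout_sym L) bv.
Qed.

Lemma spine_nbr_first : (1 < k)%N -> (1 < g (spine_nbr 1))%N.
Proof.
move=> k1; have := spine_nbr_index_neq 1; rewrite neq_ltn => /orP[|//].
case: (layout_tooth L (spine_nbr 1)) => [ev|[/andP[h0 _] _]]; last by rewrite ltnNge h0.
rewrite ltnS leqn0 => /eqP g0.
by have := spine_nbr_neq_prev (i := 1) (ltnW k1); rewrite {1}ev g0 eqxx.
Qed.

Lemma spine_nbr_last : (1 < k)%N -> (g (spine_nbr k.-1) <= k.-1)%N.
Proof.
move=> k1; have kk : (k.-1).+1 = k by rewrite prednK // ltnW.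
case: (layout_tooth L (spine_nbr k.-1)) => [ev|[/andP[_ hk] _]]; last by rewrite -ltnS kk.
have nk := spine_nbr_neq_next (i := k.-1) ltac:(lia); rewrite kk in nk.
rewrite -ltnS kk ltn_neqAle (layout_index_le L) andbT.
by apply: contraNneq nk => gk; rewrite {1}ev gk.
Qed.

Lemma avoiding_spine_switch : (1 < k)%N -> exists i,
  [/\ (0 < i)%N, (i.+1 < k)%N, (i < g (spine_nbr i))%N & (g (spine_nbr i.+1) <= i)%N].
Proof.
move=> k1.
have [|i [/andP[i0 ik] Pi Pi1]] := @exists_switch (fun i => i < g (spine_nbr i))%N k.-1
  ltac:(lia) (spine_nbr_first k1); first by rewrite -leqNgt spine_nbr_last.
exists i; split => //; first by lia.
move: Pi1 (spine_nbr_index_neq i.+1); rewrite -leqNgt leq_eqVlt ltnS.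
by case/orP => [/eqP ->|//]; rewrite eqxx.
Qed.

Lemma avoiding_graph_cross : (1 < k)%N ->
  exists i, edges_cross p (c i) (spine_nbr i) (c i.+1) (spine_nbr i.+1).
Proof.
move=> k1; have [i [i0 ik gv gu]] := avoiding_spine_switch k1.
have gc := layout_index_spine L; have ne := neq_of_index_lt (g := g).
have vc : spine_nbr i != c i.+1 by apply: spine_nbr_neq_next; lia.
have uc : spine_nbr i.+1 != c i by have := spine_nbr_neq_prev (i := i.+1); apply; lia.
have [z hz] := spine_chords_cross L i0 ik gv vc gu uc.
exists i; split; last by exists z.
have nbr_neq j : c j != spine_nbr j.
  by apply: contraTneq (spine_nbrP j) => <-; rewrite (negbTE (H_irr _)).
split; first exact: nbr_neq.
split; first exact: nbr_neq.
split; first by rewrite ne ?gc //; lia.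
split; first by rewrite eq_sym.
split; first exact: vc.
by rewrite eq_sym ne //; lia.
Qed.
End AvoidingGraph.

Lemma comb_layout_meets (R : realType) (V : finType) (p : V -> R * R) (B : rel V)
    k c g (s : R) : comb_layout p B k c g s ->
  forall H : rel V, simple_spanning p H -> exists u v, B u v && H u v.
Proof.
move=> L H [[_ H_irr] H_simple H_spanning].
have [k1|k1] := leqP k 1.
  have [w hw] := H_spanning (c 0); exists (c 0), w; rewrite hw andbT.
  have wc : w != c 0 by apply: contraTneq hw => ->; rewrite (negbTE (H_irr _)).
  case: (layout_tooth L w) => [ew|[/andP[g0 gk] _]]; last by lia.
  have gw : g w = 1%N.
    have := layout_index_le L w; have : g w != 0%N by apply: contraNneq wc => g0; rewrite ew g0.
    by lia.
  by rewrite ew gw; apply: (layout_spine_edge L); rewrite -gw (layout_index_le L).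
apply: contrapT => none.
have H_avoids u v : H u v -> ~~ B u v.
  by move=> huv; apply/negP => buv; apply: none; exists u, v; rewrite buv huv.
have [i cross] := avoiding_graph_cross L H_irr H_spanning H_avoids k1.
exact: H_simple (spine_nbrP c H_spanning i) (spine_nbrP c H_spanning i.+1) cross.
Qed.

Section FromComb.
Variables (R : realType) (V : finType) (p : V -> R * R) (B : rel V).
Hypothesis gp : general_position p.
Hypothesis B_sym : forall u v, B u v = B v u.
Hypothesis B_irr : forall u, ~~ B u u.
Hypothesis B_lines : forall u v x y, B u v -> B x y ->
  ~ line_crosses_seg (p u) (p v) (p x) (p y).
Variables (x0 : V) (P : seq V).
Hypothesis P_nonempty : (0 < size P)%N.
Hypothesis P_uniq : uniq P.
Hypothesis P_path : forall i, (i.+1 < size P)%N -> B (nth x0 P i) (nth x0 P i.+1).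
Hypothesis P_boundary : graph_pts p B `&` hull_boundary p = path_pts p x0 P.
Hypothesis P_teeth : forall w, w \notin P ->
  exists u, path_interior x0 P u /\ forall x, B w x = (x == u).
Local Notation O a b d := (orient (p a) (p b) (p d)).
Local Notation k := (size P).-1.
Local Notation c := (nth x0 P).

Definition tooth_root v := odflt v [pick u | B v u].
Definition comb_index v := index (if v \in P then v else tooth_root v) P.

Lemma comb_index_tooth v : v \notin P ->
  exists i, [/\ (0 < i < k)%N, comb_index v = i & forall x, B v x = (x == c i)].
Proof.
move=> vP; have [_ [[i [[i0 iP] ->]] Bv]] := P_teeth vP.
exists i; split => //; first by rewrite i0 -ltnS prednK.
rewrite /comb_index (negbTE vP) /tooth_root; case: pickP => [u' /[!Bv] /eqP -> | none] /=.
  by rewrite index_uniq // ltnW.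
by have := none (c i); rewrite Bv eqxx.
Qed.

Lemma spine_lt_size j : (j <= k)%N -> (j < size P)%N.
Proof. by rewrite -ltnS prednK. Qed.

Lemma comb_index_spine j : (j <= k)%N -> comb_index (c j) = j.
Proof. by move=> /spine_lt_size jP; rewrite /comb_index mem_nth // index_uniq. Qed.

Lemma comb_index_le v : (comb_index v <= k)%N.
Proof.
case: (boolP (v \in P)) => vP.
  by rewrite /comb_index vP -ltnS prednK // index_mem.
by have [i [/andP[_ ik] -> _]] := comb_index_tooth vP; rewrite ltnW.
Qed.

Lemma comb_tooth v :
  v = c (comb_index v) \/ ((0 < comb_index v < k)%N /\ B v (c (comb_index v))).
Proof.
case: (boolP (v \in P)) => vP; first by left; rewrite /comb_index vP nth_index.
by have [i [ik -> Bv]] := comb_index_tooth vP; right; rewrite ik Bv.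
Qed.

Lemma spine_edge j : (j < k)%N -> B (c j) (c j.+1).
Proof. by move=> jk; apply/P_path/spine_lt_size. Qed.

Lemma spine_neq i j : (i <= k)%N -> (j <= k)%N -> i != j -> c i != c j.
Proof. by move=> /spine_lt_size ik /spine_lt_size jk; rewrite nth_uniq. Qed.

(* The midpoint of a spine edge lies on the hull boundary, so it cannot be interior. *)
Lemma spine_edge_not_split j v w : (j < k)%N ->
  0 < O (c j) (c j.+1) v -> O (c j) (c j.+1) w < 0 -> False.
Proof.
move=> jk hv hw.
have mid : path_pts p x0 P (midpoint (p (c j)) (p (c j.+1))).
  right; exists j; split; first exact: spine_lt_size.
  by apply/lerp_on_seg/andP; split; rewrite ?invr_ge0 // invf_le1 //; lra.
by move: mid; rewrite -P_boundary => -[_ []]; have := midpoint_interior hv hw.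
Qed.

Lemma spine_edge_sameside j v w : (j < k)%N ->
  v != c j -> v != c j.+1 -> w != c j -> w != c j.+1 ->
  0 < O (c j) (c j.+1) v * O (c j) (c j.+1) w.
Proof.
move=> jk vj vj1 wj wj1.
have cj : c j != c j.+1 by apply: spine_neq; lia.
have Onz u : u != c j -> u != c j.+1 -> O (c j) (c j.+1) u != 0.
  by move=> uj uj1; apply/eqP; apply: gp.2; rewrite // eq_sym.
have [ov ow] := (Onz v vj vj1, Onz w wj wj1).
have [v_pos|] := ltP 0 (O (c j) (c j.+1) v).
  rewrite pmulr_rgt0 // lt_neqAle eq_sym ow leNgt /=.
  by apply/negP => w_neg; apply: (spine_edge_not_split jk v_pos w_neg).
rewrite le_eqVlt (negbTE ov) /= => v_neg.
rewrite nmulr_rgt0 // lt_neqAle ow leNgt /=.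
by apply/negP => w_pos; apply: (spine_edge_not_split jk w_pos v_neg).
Qed.

Lemma comb_side : exists s : R, forall j v, (j < k)%N -> v != c j -> v != c j.+1 ->
  0 < s * O (c j) (c j.+1) v.
Proof.
have [k1|k2] := leqP k 1.
  exists 1 => j v jk; have -> : j = 0%N by lia.
  case: (comb_tooth v) => [ev|[/andP[gv0 gvk] _]]; last by lia.
  have [gv|gv] : comb_index v = 0%N \/ comb_index v = 1%N by have := comb_index_le v; lia.
    by rewrite {1}ev gv eqxx.
  by rewrite {2}ev gv eqxx.
exists (O (c 0) (c 1) (c 2)); elim=> [|j IH] v jk vj vj1.
  by apply: spine_edge_sameside => //; apply: spine_neq; lia.
have cj : 0 < O (c 0) (c 1) (c 2) * O (c j.+1) (c j.+2) (c j).
  rewrite -[O (c j.+1) (c j.+2) (c j)]orient_rot.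
  by apply: IH; [lia | apply: spine_neq; lia | apply: spine_neq; lia].
by apply: mul_gt0_trans cj (spine_edge_sameside _ _ _ _ _) => //; apply: spine_neq; lia.
Qed.

Lemma comb_layout_exists : exists s, comb_layout p B k c comb_index s.
Proof.
have [s side] := comb_side; exists s; split => //.
- exact: comb_index_spine.
- exact: comb_index_le.
- exact: comb_tooth.
- exact: spine_edge.
Qed.
End FromComb.

Lemma star_meets_spanning (R : realType) (V : finType) (p : V -> R * R) (v : V)
    (H : rel V) : simple_spanning p H -> exists a b, star v a b && H a b.
Proof.
case=> [[_ H_irr] _ H_spanning]; have [u hu] := H_spanning v; exists v, u.
have vu : v != u by apply: contraTneq hu => <-; rewrite (negbTE (H_irr _)).
by rewrite /star vu eqxx hu.
Qed.

Lemma comb_meets_spanning (R : realType) (V : finType) (p : V -> R * R) (B : rel V) :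
  general_position p -> is_comb p B ->
  forall H : rel V, simple_spanning p H -> exists u v, B u v && H u v.
Proof.
move=> gp [[[B_sym B_irr] _ _] [x0 [P [[P0 P_uniq] P_path P_boundary P_teeth B_lines]]]].
have [s L] := comb_layout_exists gp B_sym B_irr B_lines P0 P_uniq P_path P_boundary P_teeth.
exact: comb_layout_meets L.
Qed.

Theorem theorem4 (R : realType) (V : finType) (p : V -> R * R) (B : rel V) :
  general_position p ->
  is_graph B ->
  ((exists v : V, forall a b, B a b = star v a b) \/ is_comb p B) ->
  forall H : rel V, simple_spanning p H -> exists u v : V, B u v && H u v.
Proof.
move=> gp _ [[v Bstar]|comb] H H_spanning; last exact: comb_meets_spanning comb H H_spanning.
have [a [b ab]] := star_meets_spanning v H_spanning.
by exists a, b; rewrite Bstar.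
Qed.
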